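(* Let $J_1,\dots,J_7$ be pairwise anticommuting orthogonal complex structures on $\mathfrak a=\mathbb R^8$, let $\theta\in(0,\pi/2)$, $J'=J_7\cos\theta+J_6J_7\sin\theta$, and $V=\mathrm{Span}(J_1,\dots,J_5,J')$. Let $\langle\cdot,\cdot\rangle$ be an inner product on $V$ whose restriction to $\mathrm{Span}(J_1,\dots,J_5)$ is standard and for which $J'\perp J_i$, $i=1,\dots,5$. Then $(V,\langle\cdot,\cdot\rangle)$ is a WS-pair.
   Context: An inner product on $V\subset\mathfrak{so}(8)$ is standard if it is a positive multiple of $(J,K)\mapsto-\mathrm{Tr}(JK)$. For a Euclidean space $\mathfrak a$, a subspace $V\subset\mathfrak{so}(\mathfrak a)$ with inner product $\langle\cdot,\cdot\rangle$ defines the metric 2-step nilpotent Lie algebra $\mathfrak n=V\oplus\mathfrak a$ (orthogonal sum, $V$ central, $\langle J,[X,Y]\rangle=\langle JX,Y\rangle$). It is a WS-pair if the corresponding simply connected nilpotent Lie group with left-invariant metric is weakly symmetric. Standing fact: this holds iff for every $J\in V$, $X\in\mathfrak a$ there is $N\in\mathcal N(V)=\{N\in O(\mathfrak a): NVN^{-1}\subset V$, $K\mapsto NKN^{-1}$ orthogonal on $(V,\langle\cdot,\cdot\rangle)\}$ with $NX=-X$, $NJ=-JN$. *)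

From HB Require Import structures.
From mathcomp Require Import all_boot all_order all_algebra.
From mathcomp Require Import reals trigo.
Set Implicit Arguments. Unset Strict Implicit. Unset Printing Implicit Defensive.
Import Order.TTheory GRing.Theory Num.Theory.
Local Open Scope ring_scope.

(* a = R^8, vectors are column vectors, endomorphisms are 8x8 matrices;
   composition of operators is the matrix product *m. *)

Definition orth_cs {R : realType} (J : 'M[R]_8) : Prop :=
  J *m J^T = 1%:M /\ J *m J = - 1%:M.

(* J_1..J_7 are indexed by 'I_7 (J_k is J (inord (k-1))).
   J' = J_7 cos theta + J_6 J_7 sin theta. *)
Definition Jprime {R : realType} (J : 'I_7 -> 'M[R]_8) (theta : R) : 'M[R]_8 :=
  cos theta *: J (inord 6) + sin theta *: (J (inord 5) *m J (inord 6)).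

Definition inV5 {R : realType} (J : 'I_7 -> 'M[R]_8) (K : 'M[R]_8) : Prop :=
  exists a : 'I_5 -> R, K = \sum_(i < 5) a i *: J (inord i).

Definition inV {R : realType} (J : 'I_7 -> 'M[R]_8) (theta : R) (K : 'M[R]_8) : Prop :=
  exists (a : 'I_5 -> R) (b : R),
    K = \sum_(i < 5) a i *: J (inord i) + b *: Jprime J theta.

(* ip is an inner product on the subspace V (only its values on V matter). *)
Definition inner_product_on {R : realType} (V : 'M[R]_8 -> Prop)
    (ip : 'M[R]_8 -> 'M[R]_8 -> R) : Prop :=
  [/\ (forall K L, V K -> V L -> ip K L = ip L K),
      (forall (c : R) K L M, V K -> V L -> V M ->
          ip (c *: K + L) M = c * ip K M + ip L M)
    & (forall K, V K -> K != 0 -> 0 < ip K K)].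

(* The restriction of ip to W is standard: a positive multiple of -Tr(JK). *)
Definition standard_on {R : realType} (W : 'M[R]_8 -> Prop)
    (ip : 'M[R]_8 -> 'M[R]_8 -> R) : Prop :=
  exists c : R, 0 < c /\
    forall K L, W K -> W L -> ip K L = c * - \tr (K *m L).

(* N(V): orthogonal N normalizing V, with conjugation orthogonal on (V, ip).
   For N orthogonal, N^{-1} = N^T. *)
Definition in_NV {R : realType} (V : 'M[R]_8 -> Prop)
    (ip : 'M[R]_8 -> 'M[R]_8 -> R) (N : 'M[R]_8) : Prop :=
  [/\ N *m N^T = 1%:M,
      (forall K, V K -> V (N *m K *m N^T))
    & (forall K L, V K -> V L -> ip (N *m K *m N^T) (N *m L *m N^T) = ip K L)].

(* WS-pair, via the standing characterization of the paper. *)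
Definition WS_pair {R : realType} (V : 'M[R]_8 -> Prop)
    (ip : 'M[R]_8 -> 'M[R]_8 -> R) : Prop :=
  forall (J : 'M[R]_8) (X : 'cV[R]_8), V J ->
    exists N : 'M[R]_8, [/\ in_NV V ip N, N *m X = - X & N *m J = - (J *m N)].

From HB Require Import structures.
From mathcomp Require Import all_boot all_order all_algebra.
From mathcomp Require Import reals trigo.
From mathcomp Require Import ring lra.
Set Implicit Arguments. Unset Strict Implicit. Unset Printing Implicit Defensive.
Import Order.TTheory GRing.Theory Num.Theory.
Local Open Scope ring_scope.

(* Write cl(a) = a_1 J_1 + ... + a_5 J_5 for a in R^5, so that V = cl(R^5) + R J'.
   Given K = cl(k) + beta J' and X, take N = J_6 cl(a) cl(b) with unit vectors a, b
   orthogonal to k.  Each factor is an orthogonal complex structure anticommuting with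
   J_7, and cl(a), cl(b) commute with J_6 J_7, so N anticommutes with J'; since a and b
   are orthogonal to k, N also anticommutes with cl(k), hence with K.  Conjugation by N
   maps cl(R^5) onto itself, where the inner product is a multiple of the
   conjugation-invariant form -Tr(JK), and sends J' to -J', which is orthogonal to
   cl(R^5); so N lies in N(V).  For N X = -X, use that X, J_1 X, ..., J_7 X is an
   orthogonal basis of R^8: choosing a orthogonal to k and to two more vectors makes
   Z = J_6 cl(a) X orthogonal to X, J_6 X and J_7 X, so Z = cl(b) X for a unit vector b
   orthogonal to k, and N X = (J_6 cl(a))^2 X = -X. *)

Section EuclideanSpace.
Variables (R : rcfType) (n : nat).
Implicit Types (X Y Z : 'cV[R]_n) (A : 'M[R]_n).

Definition vdot X Y : R := (X^T *m Y) 0 0.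

Lemma vdotE X Y : vdot X Y = \sum_i X i 0 * Y i 0.
Proof. by rewrite /vdot mxE; apply: eq_bigr => i _; rewrite mxE. Qed.

Lemma vdotC X Y : vdot X Y = vdot Y X.
Proof. by rewrite !vdotE; apply: eq_bigr => i _; rewrite mulrC. Qed.

Lemma vdotDr X Y Z : vdot X (Y + Z) = vdot X Y + vdot X Z.
Proof. by rewrite /vdot mulmxDr mxE. Qed.

Lemma vdotZr X (c : R) Y : vdot X (c *: Y) = c * vdot X Y.
Proof. by rewrite /vdot -scalemxAr mxE. Qed.

Lemma vdotNr X Y : vdot X (- Y) = - vdot X Y.
Proof. by rewrite /vdot mulmxN mxE. Qed.

Lemma vdot_sumr I (r : seq I) (P : pred I) X (F : I -> 'cV[R]_n) :
  vdot X (\sum_(i <- r | P i) F i) = \sum_(i <- r | P i) vdot X (F i).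
Proof. by rewrite /vdot mulmx_sumr summxE. Qed.

Lemma vdot_mulmxl A X Y : vdot (A *m X) Y = vdot X (A^T *m Y).
Proof. by rewrite /vdot trmx_mul mulmxA. Qed.

Lemma vdot_skew A X : A^T = - A -> vdot X (A *m X) = 0.
Proof.
move=> A_skew; have : vdot X (A *m X) = - vdot X (A *m X).
  by rewrite {1}vdotC vdot_mulmxl A_skew mulNmx vdotNr.
lra.
Qed.

Lemma vdot_orthogonal A X Y : A^T *m A = 1%:M -> vdot (A *m X) (A *m Y) = vdot X Y.
Proof. by move=> AtA; rewrite vdot_mulmxl mulmxA AtA mul1mx. Qed.

Lemma vdot_eq0 X : (vdot X X == 0) = (X == 0).
Proof.
apply/eqP/eqP => [XX0|->]; last by rewrite /vdot mulmx0 mxE.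
apply/matrixP => i j; rewrite (ord1 j) mxE.
move: XX0; rewrite vdotE => /psumr_eq0P XX0.
by apply/eqP; rewrite -sqrf_eq0 expr2 XX0 // => k _; exact: sqr_ge0.
Qed.

Lemma orthogonal_expansion (F : 'I_n -> 'cV[R]_n) (c : R) :
  c != 0 -> (forall i j, vdot (F i) (F j) = (i == j)%:R * c) ->
  forall Y, c *: Y = \sum_i vdot (F i) Y *: F i.
Proof.
move=> c0 F_orth Y; pose U : 'M[R]_n := \matrix_(i, j) F j i 0.
have UtU : U^T *m U = c%:M.
  apply/matrixP => i j; rewrite [RHS]mxE -mulr_natr mulrC -F_orth vdotE mxE.
  by apply: eq_bigr => k _; rewrite !mxE.
have UUt : U *m U^T = c%:M.
  have /mulmx1C : (c^-1 *: U^T) *m U = 1%:M.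
    by rewrite -scalemxAl UtU scale_scalar_mx mulVf.
  rewrite -scalemxAr => /(congr1 (fun M => c *: M)).
  by rewrite scalerA divff // scale1r scale_scalar_mx mulr1.
rewrite -mul_scalar_mx -UUt -mulmxA; apply/matrixP => i j.
rewrite (ord1 j) mxE summxE; apply: eq_bigr => k _.
by rewrite !mxE vdotE mulrC; congr (_ * _); apply: eq_bigr => l _; rewrite !mxE.
Qed.

Lemma exists_unit_orthogonal (s : seq 'cV[R]_n) : (size s < n)%N ->
  exists a, vdot a a = 1 /\ {in s, forall w, vdot a w = 0}.
Proof.
move=> s_small; pose M : 'M[R]_(n, size s) := \matrix_(i, j) s`_j i 0.
have /rowV0Pn [w /sub_kermxP wM0 w0] : kermx M != 0.
  rewrite -mxrank_eq0 mxrank_ker subn_eq0 -ltnNge.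
  exact: leq_ltn_trans (rank_leq_col M) s_small.
have vv_gt0 : 0 < vdot w^T w^T.
  by rewrite lt_def vdot_eq0 trmx_eq0 w0 vdotE sumr_ge0 // => i _; exact: sqr_ge0.
exists ((Num.sqrt (vdot w^T w^T))^-1 *: w^T); split.
  rewrite vdotZr vdotC vdotZr mulrA -expr2 exprVn sqr_sqrtr ?ltW //.
  by rewrite mulVf // lt0r_neq0.
move=> x /(nthP 0) [j j_lt <-]; rewrite vdotC vdotZr vdotC.
have /matrixP/(_ 0 (Ordinal j_lt)) := wM0; rewrite !mxE => wsj.
suff -> : vdot w^T s`_j = 0 by rewrite mulr0.
by rewrite vdotE; apply: etrans wsj; apply: eq_bigr => i _; rewrite !mxE.
Qed.

End EuclideanSpace.

Section MatrixRelations.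
Variables (R : rcfType) (n : nat).
Implicit Types (A B C K L N : 'M[R]_n).

Definition scommute (s : R) A B := A *m B = s *: (B *m A).

Lemma scommute_refl A : scommute 1 A A.
Proof. by rewrite /scommute scale1r. Qed.

Lemma scommute_sym A B : scommute (-1) A B -> scommute (-1) B A.
Proof. by rewrite /scommute !scaleN1r => ->; rewrite opprK. Qed.

Lemma scommuteMl s t A B C :
  scommute s A C -> scommute t B C -> scommute (s * t) (A *m B) C.
Proof.
move=> hAC hBC; rewrite /scommute -mulmxA hBC -scalemxAr (mulmxA A) hAC.
by rewrite -scalemxAl -mulmxA scalerA mulrC.
Qed.

Lemma scommuteMr s t A B C :
  scommute s A B -> scommute t A C -> scommute (s * t) A (B *m C).
Proof.
move=> hAB hAC; rewrite /scommute mulmxA hAB -scalemxAl -(mulmxA B) hAC.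
by rewrite -scalemxAr mulmxA scalerA.
Qed.

Lemma scommuteDr s A B C : scommute s A B -> scommute s A C -> scommute s A (B + C).
Proof. by move=> hAB hAC; rewrite /scommute mulmxDr mulmxDl hAB hAC scalerDr. Qed.

Lemma scommuteZr s (c : R) A B : scommute s A B -> scommute s A (c *: B).
Proof. by move=> hAB; rewrite /scommute -scalemxAr -scalemxAl hAB scalerA mulrC -scalerA. Qed.

Definition conjm N K := N *m K *m N^T.

Fact conjm_is_linear N : linear (conjm N).
Proof. by move=> c K L; rewrite /conjm mulmxDr mulmxDl -scalemxAr -scalemxAl. Qed.

HB.instance Definition _ N :=
  GRing.isLinear.Build R 'M[R]_n 'M[R]_n _ (conjm N) (conjm_is_linear N).

Lemma conjmM A B K : conjm (A *m B) K = conjm A (conjm B K).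
Proof. by rewrite /conjm trmx_mul !mulmxA. Qed.

Lemma conjm_scommute s N K : N *m N^T = 1%:M -> scommute s N K -> conjm N K = s *: K.
Proof. by move=> NNt NK; rewrite /conjm NK -scalemxAl -mulmxA NNt mulmx1. Qed.

Lemma mxtrace_conjm N K L :
  N *m N^T = 1%:M -> \tr (conjm N K *m conjm N L) = \tr (K *m L).
Proof.
move=> NNt; have NtN := mulmx1C NNt.
rewrite /conjm !mulmxA -(mulmxA _ N^T) NtN mulmx1 -!mulmxA mxtrace_mulC.
by rewrite -!mulmxA NtN mulmx1.
Qed.

Lemma orthogonal_mulmx A B :
  A *m A^T = 1%:M -> B *m B^T = 1%:M -> (A *m B) *m (A *m B)^T = 1%:M.
Proof. by move=> AAt BBt; rewrite trmx_mul mulmxA -(mulmxA A) BBt mulmx1 AAt. Qed.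

Lemma cs_orthogonal A : A^T = - A -> A *m A = - 1%:M -> A *m A^T = 1%:M.
Proof. by move=> AT AA; rewrite AT mulmxN AA opprK. Qed.

End MatrixRelations.

Definition clifford_family (R : rcfType) n k (E : 'I_k -> 'M[R]_n) :=
  [/\ forall i, (E i)^T = - E i, forall i, E i *m E i = - 1%:M
    & forall i j, i != j -> scommute (-1) (E i) (E j)].

Lemma clifford_family_comp (R : rcfType) n k k' (E : 'I_k -> 'M[R]_n)
    (f : 'I_k' -> 'I_k) :
  injective f -> clifford_family E -> clifford_family (E \o f).
Proof.
move=> f_inj [E_skew E_sq E_anti]; split=> [i|i|i j ij]; rewrite /= ?E_skew ?E_sq //.
by apply: E_anti; rewrite (inj_eq f_inj).
Qed.

Section CliffordFamily.
Variables (R : rcfType) (n k : nat) (E : 'I_k -> 'M[R]_n).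
Hypothesis E_cliff : clifford_family E.
Implicit Types (a b u l : 'cV[R]_k) (X Y : 'cV[R]_n) (A B : 'M[R]_n).

Definition cliff a : 'M[R]_n := \sum_i a i 0 *: E i.

Fact cliff_is_linear : linear cliff.
Proof.
move=> c a b; rewrite /cliff scaler_sumr -big_split; apply: eq_bigr => i _ /=.
by rewrite !mxE scalerDl scalerA.
Qed.

HB.instance Definition _ :=
  GRing.isLinear.Build R 'cV[R]_k 'M[R]_n _ cliff cliff_is_linear.

Lemma cliff_delta i : cliff (delta_mx i 0) = E i.
Proof.
rewrite /cliff (bigD1 i) //= big1 => [|j ji]; first by rewrite mxE !eqxx scale1r addr0.
by rewrite mxE (negbTE ji) scale0r.
Qed.

Lemma cliff_skew a : (cliff a)^T = - cliff a.
Proof.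
case: E_cliff => E_skew _ _.
rewrite /cliff [LHS]linear_sum -sumrN.
by apply: eq_bigr => i _; rewrite linearZ /= E_skew scalerN.
Qed.

Lemma scommute_cliff s a A : (forall i, scommute s (E i) A) -> scommute s (cliff a) A.
Proof.
move=> EA; rewrite /scommute /cliff mulmx_suml mulmx_sumr scaler_sumr.
by apply: eq_bigr => i _; rewrite -scalemxAl -scalemxAr EA scalerA mulrC -scalerA.
Qed.

Lemma family_anticomm i j : E i *m E j + E j *m E i = - ((i == j)%:R * 2)%:M.
Proof.
case: E_cliff => _ E_sq E_anti; case: (eqVneq i j) => [<-|ij].
  by rewrite E_sq mul1r -opprD -raddfD.
by rewrite E_anti // scaleN1r addNr mul0r raddf0 oppr0.
Qed.

Lemma cliff_mulE a b :
  cliff a *m cliff b = \sum_i \sum_j (a i 0 * b j 0) *: (E i *m E j).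
Proof.
rewrite /cliff mulmx_suml; apply: eq_bigr => i _.
by rewrite mulmx_sumr; apply: eq_bigr => j _; rewrite -scalemxAl -scalemxAr scalerA.
Qed.

Lemma cliff_anticomm a b :
  cliff a *m cliff b + cliff b *m cliff a = - (2 * vdot a b)%:M.
Proof.
rewrite !cliff_mulE [X in _ + X]exchange_big -big_split vdotE mulr_sumr raddf_sum -sumrN.
apply: eq_bigr => i _; rewrite -big_split (bigD1 i) //= big1 => [|j ji].
  rewrite addr0 (mulrC (b i 0)) -scalerDr family_anticomm eqxx.
  by rewrite scalerN scale_scalar_mx mul1r mulrC.
rewrite (mulrC (b j 0)) -scalerDr family_anticomm eq_sym (negbTE ji).
by rewrite mul0r raddf0 oppr0 scaler0.
Qed.

Lemma cliff_sq a : cliff a *m cliff a = - (vdot a a)%:M.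
Proof.
apply: (@scalerI _ _ 2); first by rewrite pnatr_eq0.
by rewrite scaler_nat mulr2n cliff_anticomm scalerN scale_scalar_mx.
Qed.

Lemma scommute_cliff_orth a b : vdot a b = 0 -> scommute (-1) (cliff a) (cliff b).
Proof.
move=> ab0; rewrite /scommute scaleN1r; apply/eqP; rewrite -subr_eq0 opprK.
by rewrite cliff_anticomm ab0 mulr0 raddf0 oppr0.
Qed.

Lemma cliff_orthogonal u : vdot u u = 1 -> cliff u *m (cliff u)^T = 1%:M.
Proof. by move=> uu; rewrite cliff_skew mulmxN cliff_sq uu opprK. Qed.

Lemma conjm_cliff u l :
  conjm (cliff u) (cliff l) = cliff ((2 * vdot u l) *: u - vdot u u *: l).
Proof.
have ul : cliff u *m cliff l = - (cliff l *m cliff u) - (2 * vdot u l)%:M.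
  by rewrite -cliff_anticomm [RHS]addrC addrK.
rewrite /conjm cliff_skew mulmxN ul mulmxDl !mulNmx -mulmxA cliff_sq mulmxN.
by rewrite mul_mx_scalar mul_scalar_mx opprK opprB linearB !linearZ.
Qed.

Lemma vdot_cliff a b X : vdot (cliff a *m X) (cliff b *m X) = vdot a b * vdot X X.
Proof.
have skew c d : vdot (cliff c *m X) (cliff d *m X) = - vdot X (cliff c *m cliff d *m X).
  by rewrite vdot_mulmxl cliff_skew mulNmx -mulmxA vdotNr.
have := cliff_anticomm a b; move/(congr1 (fun M => vdot X (M *m X))).
rewrite mulmxDl vdotDr mulNmx mul_scalar_mx vdotNr vdotZr.
have := skew a b; have := skew b a; rewrite vdotC; lra.
Qed.

Lemma vdot_mulmx_cliff a B X Y :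
  vdot Y (B *m cliff a *m X) = vdot a (\col_i vdot Y (B *m E i *m X)).
Proof.
rewrite /cliff mulmx_sumr mulmx_suml vdot_sumr vdotE; apply: eq_bigr => i _.
by rewrite -scalemxAr -scalemxAl vdotZr mxE.
Qed.

Lemma vdot_family i j X : vdot (E i *m X) (E j *m X) = (i == j)%:R * vdot X X.
Proof.
case: E_cliff => E_skew E_sq E_anti.
rewrite vdot_mulmxl mulmxA E_skew mulNmx; case: (eqVneq i j) => [<-|ij].
  by rewrite E_sq opprK mul1mx mul1r.
rewrite mul0r -mulNmx vdot_skew // trmx_mul linearN /= !E_skew opprK mulNmx mulNmx opprK.
by rewrite (E_anti _ _ ij) scaleN1r.
Qed.

End CliffordFamily.

Lemma orth_cs_skew (R : realType) (A : 'M[R]_8) : orth_cs A -> A^T = - A.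
Proof.
by case=> AAt AA; rewrite -[A^T]mul1mx -[1%:M]opprK -AA mulNmx -mulmxA AAt mulmx1.
Qed.

Lemma clifford_family_orth_cs (R : realType) k (J : 'I_k -> 'M[R]_8) :
  (forall i, orth_cs (J i)) -> (forall i j, i != j -> J i *m J j = - (J j *m J i)) ->
  clifford_family J.
Proof.
move=> J_orth J_anti; split=> [i|i|i j ij]; first exact: orth_cs_skew.
  by case: (J_orth i).
by rewrite /scommute scaleN1r J_anti.
Qed.

Lemma inord_neq n p q : (p < n.+1)%N -> (q < n.+1)%N -> p != q ->
  (inord p : 'I_n.+1) != inord q.
Proof. by move=> pn qn; apply: contra => /eqP/(congr1 val); rewrite /= !inordK // => ->. Qed.

Section SevenStructures.
Variables (R : realType) (J : 'I_7 -> 'M[R]_8).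
Hypothesis J_cliff : clifford_family J.
Implicit Types (X Z : 'cV[R]_8) (a b k l : 'cV[R]_5).

Definition E5 (i : 'I_5) : 'M[R]_8 := J (inord i).
Let J6 := J (inord 5).
Let J7 := J (inord 6).

Lemma E5_cliff : clifford_family E5.
Proof.
apply: (@clifford_family_comp _ _ _ _ J (fun i : 'I_5 => inord i)) => // i j /eqP.
by rewrite -(inj_eq val_inj) /= !inordK ?(leq_trans (ltn_ord _)) // => /eqP/val_inj.
Qed.

Lemma scommute_J p q : (p < 7)%N -> (q < 7)%N -> p != q ->
  scommute (-1) (J (inord p)) (J (inord q)).
Proof. by case: J_cliff => _ _ J_anti pn qn pq; apply: J_anti; apply: inord_neq. Qed.

Lemma scommute_E5 q i : (4 < q < 7)%N -> scommute (-1) (E5 i) (J (inord q)).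
Proof.
case/andP=> q4 q7; apply: scommute_J => //; first exact: leq_trans (ltn_ord i) _.
by rewrite neq_ltn (leq_trans (ltn_ord i)).
Qed.

Lemma cliff_span X Z : X != 0 -> vdot X Z = 0 -> vdot (J6 *m X) Z = 0 ->
  vdot (J7 *m X) Z = 0 -> exists b, Z = cliff E5 b *m X.
Proof.
case: J_cliff => J_skew _ _ X0 XZ J6Z J7Z.
have XX0 : vdot X X != 0 by rewrite vdot_eq0.
pose F (j : 'I_8) := if unlift ord0 j is Some i then J i *m X else X.
have F_orth i j : vdot (F i) (F j) = (i == j)%:R * vdot X X.
  rewrite /F; case: unliftP => [i' ->|->]; case: unliftP => [j' ->|->].
  - by rewrite vdot_family // (inj_eq lift_inj).
  - by rewrite vdotC vdot_skew // eq_sym (negbTE (neq_lift _ _)) mul0r.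
  - by rewrite vdot_skew // (negbTE (neq_lift _ _)) mul0r.
  - by rewrite eqxx mul1r.
exists (\col_i (vdot (E5 i *m X) Z / vdot X X)); apply: (scalerI XX0).
rewrite (orthogonal_expansion XX0 F_orth) big_ord_recl /F unlift_none XZ scale0r add0r.
under eq_bigr => i _ do rewrite liftK.
rewrite (eq_bigr (fun i : 'I_7 => vdot (J (inord i) *m X) Z *: (J (inord i) *m X)));
  last by move=> i _; rewrite inord_val.
rewrite 2!big_ord_recr /= -/J6 -/J7 J6Z J7Z !scale0r !addr0.
rewrite /cliff mulmx_suml scaler_sumr.
by apply: eq_bigr => i _; rewrite mxE -scalemxAl scalerA mulrC divfK.
Qed.

Definition reverser (a b : 'cV[R]_5) := J6 *m cliff E5 a *m cliff E5 b.

Lemma cliff_scommute_J q a : (4 < q < 7)%N -> scommute (-1) (cliff E5 a) (J (inord q)).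
Proof. by move=> q57; apply: scommute_cliff => i; apply: scommute_E5. Qed.

Lemma J6_scommute_cliff a : scommute (-1) J6 (cliff E5 a).
Proof. exact/scommute_sym/cliff_scommute_J. Qed.

Lemma exists_reversing_pair k X : exists a b,
  [/\ vdot a a = 1, vdot b b = 1, vdot a k = 0, vdot b k = 0 & reverser a b *m X = - X].
Proof.
wlog X0 : X / X != 0 => [nz_case|].
  have [->|] := eqVneq X 0; last exact: nz_case.
  have [|a [b [aa bb ak bk _]]] := nz_case (const_mx 1).
    by apply/eqP => /matrixP/(_ 0 0)/eqP; rewrite !mxE oner_eq0.
  by exists a, b; rewrite mulmx0 oppr0.
have [J_skew J_sq _] := J_cliff; have E5c := E5_cliff.
have XX0 : vdot X X != 0 by rewrite vdot_eq0.
(* [a _|_ w7] makes [J6 *m cliff E5 a *m X] orthogonal to [J7 *m X], and [a _|_ wk]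
   makes the resulting [b] orthogonal to [k]. *)
pose w7 := \col_i vdot (J7 *m X) (J6 *m E5 i *m X).
pose wk := \col_i vdot (cliff E5 k *m X) (J6 *m E5 i *m X).
have [a [aa a_orth]] := @exists_unit_orthogonal R 5 [:: k; w7; wk] isT.
pose A := J6 *m cliff E5 a.
have A_skew : A^T = - A.
  rewrite trmx_mul cliff_skew // J_skew mulNmx mulmxN opprK.
  by rewrite /A cliff_scommute_J // scaleN1r.
have AA : A *m A = - 1%:M.
  rewrite /A mulmxA -(mulmxA J6) cliff_scommute_J // scaleN1r.
  rewrite mulmxN mulNmx !mulmxA J_sq.
  by rewrite !mulNmx mul1mx opprK cliff_sq // aa.
have AtA : A^T *m A = 1%:M by rewrite A_skew mulNmx AA opprK.
have [b Zb] : exists b, A *m X = cliff E5 b *m X.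
  apply: cliff_span => //; first by rewrite vdot_skew.
    rewrite vdot_mulmxl /A J_skew !mulmxA mulNmx (J_sq (inord 5)) opprK mul1mx.
    by rewrite vdot_skew ?cliff_skew.
  by rewrite /A vdot_mulmx_cliff a_orth // !inE eqxx orbT.
exists a, b; split.
- exact: aa.
- by apply: (mulIf XX0); rewrite mul1r -(vdot_cliff E5c) -Zb vdot_orthogonal.
- by rewrite a_orth // mem_head.
- apply: (mulIf XX0); rewrite mul0r -(vdot_cliff E5c) -Zb vdotC /A vdot_mulmx_cliff.
  by rewrite a_orth // !inE eqxx !orbT.
- by rewrite /reverser -/A -mulmxA -Zb mulmxA AA mulNmx mul1mx.
Qed.

Lemma reverser_orthogonal a b : vdot a a = 1 -> vdot b b = 1 ->
  reverser a b *m (reverser a b)^T = 1%:M.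
Proof.
have [J_skew J_sq _] := J_cliff; move=> aa bb.
apply: orthogonal_mulmx; first apply: orthogonal_mulmx.
- exact: cs_orthogonal (J_skew _) (J_sq _).
- exact: (cliff_orthogonal E5_cliff).
- exact: (cliff_orthogonal E5_cliff).
Qed.

Lemma scommute_reverser_cliff a b k : vdot a k = 0 -> vdot b k = 0 ->
  scommute (-1) (reverser a b) (cliff E5 k).
Proof.
move=> ak bk; have E5c := E5_cliff.
have := scommuteMl (scommuteMl (J6_scommute_cliff k) (scommute_cliff_orth E5c ak))
  (scommute_cliff_orth E5c bk).
by rewrite mulrNN mulr1 mul1r.
Qed.

Lemma scommute_reverser_Jprime theta a b :
  scommute (-1) (reverser a b) (Jprime J theta).
Proof.
have J67 : scommute (-1) J6 J7 by apply: scommute_J.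
have cliff7 c : scommute (-1) (cliff E5 c) J7 by apply: cliff_scommute_J.
have cliff67 c : scommute 1 (cliff E5 c) (J6 *m J7).
  have := scommuteMr (cliff_scommute_J c (isT : 4 < 5 < 7)%N) (cliff7 c).
  by rewrite mulrNN mulr1.
apply: scommuteDr; apply: scommuteZr.
  have := scommuteMl (scommuteMl J67 (cliff7 a)) (cliff7 b).
  by rewrite mulrNN mulr1 mul1r.
have J6_J67 := scommuteMr (scommute_refl J6) J67.
have := scommuteMl (scommuteMl J6_J67 (cliff67 a)) (cliff67 b).
by rewrite !mulr1 mul1r.
Qed.

Lemma conjm_reverser_cliff a b l :
  exists m, conjm (reverser a b) (cliff E5 l) = cliff E5 m.
Proof.
have [J_skew J_sq _] := J_cliff; have E5c := E5_cliff.
rewrite /reverser !conjmM !conjm_cliff //.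
rewrite (conjm_scommute (cs_orthogonal (J_skew _) (J_sq _)) (J6_scommute_cliff _)).
by rewrite scaleN1r -linearN; eexists.
Qed.

End SevenStructures.

Section InnerProduct.
Variables (R : realType) (J : 'I_7 -> 'M[R]_8) (theta : R).
Variable ip : 'M[R]_8 -> 'M[R]_8 -> R.
Hypothesis ip_inner : inner_product_on (inV J theta) ip.
Hypothesis ip_std : standard_on (inV5 J) ip.
Hypothesis ip_perp : forall i : 'I_5, ip (Jprime J theta) (J (inord i)) = 0.
Let J' := Jprime J theta.
Let V := inV J theta.
Local Notation cl := (cliff (E5 J)).
Implicit Types (k l m : 'cV[R]_5) (K L M N : 'M[R]_8).

Lemma inV_clD l g : V (cl l + g *: J').
Proof. by exists (fun i => l i 0), g. Qed.

Lemma inVP K : V K -> exists l g, K = cl l + g *: J'.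
Proof.
case=> a [g ->]; exists (\col_i a i), g; congr (_ + _).
by apply: eq_bigr => i _; rewrite mxE.
Qed.

Lemma inV_lin c K L : V K -> V L -> V (c *: K + L).
Proof.
move=> /inVP [k [g ->]] /inVP [l [h ->]].
rewrite scalerDr scalerA addrACA -linearZ -linearD -scalerDl.
exact: inV_clD.
Qed.

Lemma inV_cl l : V (cl l).
Proof. by rewrite -[cliff _ _]addr0 -(scale0r J'); exact: inV_clD. Qed.

Lemma inV_Jprime : V J'.
Proof. by rewrite -[J']add0r -(linear0 cl) -[J']scale1r; exact: inV_clD. Qed.

Lemma ip_linl c K L M : V K -> V L -> V M -> ip (c *: K + L) M = c * ip K M + ip L M.
Proof. by case: ip_inner => _ lin _; apply: lin. Qed.

Lemma ip_linr c K L M : V K -> V L -> V M -> ip M (c *: K + L) = c * ip M K + ip M L.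
Proof.
case: ip_inner => sym _ _ VK VL VM.
by rewrite sym ?ip_linl ?(sym M) //; exact: inV_lin.
Qed.

Lemma ip_cliff_Jprime l : ip (cl l) J' = 0.
Proof.
have ip0 : ip 0 J' = 0.
  have := ip_linl 1 (inV_cl 0) (inV_cl 0) inV_Jprime.
  by rewrite linear0 scale1r addr0 mul1r; lra.
suff [_ ->] : V (cl l) /\ ip (cl l) J' = 0 by [].
rewrite /cliff; elim/big_rec: _ => [|i K _ [VK ipK]].
  by split; [rewrite -(linear0 cl); exact: inV_cl | exact: ip0].
have VE : V (E5 J i) by rewrite -(cliff_delta (E5 J)); exact: inV_cl.
split; first exact: inV_lin.
case: ip_inner => sym _ _; have VJ' := inV_Jprime.
by rewrite ip_linl // ipK sym // ip_perp mulr0 addr0.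
Qed.

Lemma ip_split_Jprime l m g h :
  ip (cl l + g *: J') (cl m + h *: J') = ip (cl l) (cl m) + g * h * ip J' J'.
Proof.
case: ip_inner => sym _ _; have VJ' := inV_Jprime.
have Vl := inV_cl l; have Vm := inV_cl m; have Vmh := inV_clD m h.
rewrite addrC ip_linl // (addrC (cliff _ m)) !(ip_linr h) // ip_cliff_Jprime.
by rewrite sym // ip_cliff_Jprime; ring.
Qed.

Lemma ip_conjm_cliff N l m l' m' : N *m N^T = 1%:M ->
  conjm N (cl l) = cl l' -> conjm N (cl m) = cl m' ->
  ip (cl l') (cl m') = ip (cl l) (cl m).
Proof.
have [c [_ std]] := ip_std; move=> NNt Nl Nm.
rewrite !std; try by eexists.
by rewrite -Nl -Nm mxtrace_conjm.
Qed.

Lemma in_NV_of_scommute N : N *m N^T = 1%:M -> scommute (-1) N J' ->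
  (forall l, exists m, conjm N (cl l) = cl m) -> in_NV V ip N.
Proof.
move=> NNt NJ' Ncliff.
have conjV l g : exists m, conjm N (cl l) = cl m /\
    N *m (cl l + g *: J') *m N^T = cl m + (- g) *: J'.
  have [m Nlm] := Ncliff l; exists m; split => //.
  rewrite -/(conjm N _) linearD linearZ /= Nlm (conjm_scommute NNt NJ').
  by rewrite scalerA mulrN1 scaleNr.
split=> // [K /inVP [l [g ->]] | K L /inVP [l [g ->]] /inVP [m [h ->]]].
  by have [m [_ ->]] := conjV l g; exact: inV_clD.
have [l' [Nl ->]] := conjV l g; have [m' [Nm ->]] := conjV m h.
by rewrite !ip_split_Jprime (ip_conjm_cliff NNt Nl Nm) mulrNN.
Qed.

End InnerProduct.

Theorem mainTheorem5 (R : realType) (J : 'I_7 -> 'M[R]_8) (theta : R)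
    (ip : 'M[R]_8 -> 'M[R]_8 -> R) :
  (forall i, orth_cs (J i)) ->
  (forall i j, i != j -> J i *m J j = - (J j *m J i)) ->
  0 < theta < pi / 2 ->
  inner_product_on (inV J theta) ip ->
  standard_on (inV5 J) ip ->
  (forall i : 'I_5, ip (Jprime J theta) (J (inord i)) = 0) ->
  WS_pair (inV J theta) ip.
Proof.
move=> J_orth J_anti _ ip_inner ip_std ip_perp K X /inVP [k [beta ->]].
have J_cliff := clifford_family_orth_cs J_orth J_anti.
have [a [b [aa bb ak bk NX]]] := exists_reversing_pair J_cliff k X.
exists (reverser J a b); split=> //.
  apply: in_NV_of_scommute => //; first exact: reverser_orthogonal.
    exact: scommute_reverser_Jprime.
  exact: conjm_reverser_cliff.
have : scommute (-1) (reverser J a b) (cliff (E5 J) k + beta *: Jprime J theta).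
  apply: scommuteDr; first exact: scommute_reverser_cliff.
  by apply: scommuteZr; exact: scommute_reverser_Jprime.
by rewrite /scommute scaleN1r.
Qed.
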